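(* Let $\rho,p:\mathbb R^3\to\mathbb R$ and $H:\mathbb R^3\to\mathbb R^3$ be smooth with $\rho>0$, let $\gamma$ be a constant, and let $P$ be the $3\times3$ second order operator on $\mathbb R_t\times\mathbb R^3_x$ acting on $\beta(t,x)$ by $P\beta=-\rho\partial_t^2\beta+\gamma\nabla(p\operatorname{div}\beta)+\nabla(\beta\cdot\nabla p)+(\nabla\times(\nabla\times(\beta\times H)))\times H+(\nabla\times H)\times(\nabla\times(\beta\times H))$, with principal symbol $p_2(x;\tau,\xi)=(\rho\tau^2-(H\cdot\xi)^2)\operatorname{Id}_3-(\gamma p+|H|^2)\xi\otimes\xi+(H\cdot\xi)(\xi\otimes H+H\otimes\xi)$. Assume $c^2=\gamma p/\rho>0$, $0<|H|^2\ne\rho c^2$, $\xi\cdot H\ne0$ and $\xi\times H\neq0$. Then the characteristic variety $\{\det p_2=0\}$ of $P$ is the disjoint union of $\{q_1=0\}$, $\{q_2=0\}$, $\{q_3=0\}$, where $q_1=\rho\tau^2-(H\cdot\xi)^2$, $q_2=\rho(\tau^2-c_s^2(x,\xi))$, $q_3=\rho(\tau^2-c_f^2(x,\xi))$ with $c_f^2(x,\xi)=\tfrac12\big((c^2+h^2)|\xi|^2+\sqrt{(c^2-h^2)^2|\xi|^4+4b^2c^2|\xi|^2}\big)$, $c_s^2(x,\xi)=\tfrac12\big((c^2+h^2)|\xi|^2-\sqrt{(c^2-h^2)^2|\xi|^4+4b^2c^2|\xi|^2}\big)$, $h^2=|H|^2/\rho$, $b^2=|\xi\times H|^2/\rho$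.
   Context: $(\tau,\xi)$ are dual to $(t,x)$; principal symbols are taken with the convention $\partial\mapsto i\xi$ (so $\partial_t\mapsto i\tau$). The inequalities $\xi\cdot H\neq0$, $\xi\times H\ne0$ are imposed at the points $(t,x;\tau,\xi)$ considered, with $H=H(x)$. *)

From HB Require Import structures.
From mathcomp Require Import all_boot all_order all_algebra.
Set Implicit Arguments. Unset Strict Implicit. Unset Printing Implicit Defensive.
Import Order.TTheory GRing.Theory Num.Theory.
Local Open Scope ring_scope.

Definition dotv (R : rcfType) (u v : 'cV[R]_3) : R := (u^T *m v) 0 0.

Definition crossv (R : rcfType) (u v : 'cV[R]_3) : 'cV[R]_3 :=
  \col_(i < 3)
    (if i == 0 :> nat then u 1 0 * v 2%:R 0 - u 2%:R 0 * v 1 0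
     else if i == 1 :> nat then u 2%:R 0 * v 0 0 - u 0 0 * v 2%:R 0
     else u 0 0 * v 1 0 - u 1 0 * v 0 0).

Definition tensv (R : rcfType) (u v : 'cV[R]_3) : 'M[R]_3 := u *m v^T.

(* principal symbol p_2(x;tau,xi) of P, with rho, p, H evaluated at x *)
Definition p2 (R : rcfType) (gamma rho pp : R) (H : 'cV[R]_3) (tau : R)
    (xi : 'cV[R]_3) : 'M[R]_3 :=
  (rho * tau ^+ 2 - (dotv H xi) ^+ 2)%:M
  - (gamma * pp + dotv H H) *: tensv xi xi
  + dotv H xi *: (tensv xi H + tensv H xi).

Definition c2 (R : rcfType) (gamma rho pp : R) : R := gamma * pp / rho.
Definition h2 (R : rcfType) (rho : R) (H : 'cV[R]_3) : R := dotv H H / rho.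
Definition b2 (R : rcfType) (rho : R) (H xi : 'cV[R]_3) : R :=
  dotv (crossv xi H) (crossv xi H) / rho.

Definition disc (R : rcfType) (gamma rho pp : R) (H xi : 'cV[R]_3) : R :=
  Num.sqrt ((c2 gamma rho pp - h2 rho H) ^+ 2 * (dotv xi xi) ^+ 2
            + 4 * b2 rho H xi * c2 gamma rho pp * dotv xi xi).

Definition cf2 (R : rcfType) (gamma rho pp : R) (H xi : 'cV[R]_3) : R :=
  2^-1 * ((c2 gamma rho pp + h2 rho H) * dotv xi xi + disc gamma rho pp H xi).
Definition cs2 (R : rcfType) (gamma rho pp : R) (H xi : 'cV[R]_3) : R :=
  2^-1 * ((c2 gamma rho pp + h2 rho H) * dotv xi xi - disc gamma rho pp H xi).

Definition q1 (R : rcfType) (rho : R) (H : 'cV[R]_3) (tau : R) (xi : 'cV[R]_3) : R :=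
  rho * tau ^+ 2 - (dotv H xi) ^+ 2.
Definition q2 (R : rcfType) (gamma rho pp : R) (H : 'cV[R]_3) (tau : R)
    (xi : 'cV[R]_3) : R :=
  rho * (tau ^+ 2 - cs2 gamma rho pp H xi).
Definition q3 (R : rcfType) (gamma rho pp : R) (H : 'cV[R]_3) (tau : R)
    (xi : 'cV[R]_3) : R :=
  rho * (tau ^+ 2 - cf2 gamma rho pp H xi).

From HB Require Import structures.
From mathcomp Require Import all_boot all_order all_algebra.
From mathcomp Require Import ring.
Import Order.TTheory GRing.Theory Num.Theory.
Set Implicit Arguments. Unset Strict Implicit. Unset Printing Implicit Defensive.
Local Open Scope ring_scope.

(* Expanding in coordinates,
     det p2 = q1 * (rho^2 tau^4 - rho (gamma p + |H|^2) |xi|^2 tau^2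
                    + gamma p (H.xi)^2 |xi|^2).
   By Vieta and Lagrange's identity |xi x H|^2 = |H|^2 |xi|^2 - (H.xi)^2, the
   quadratic in tau^2 on the right is rho^2 (tau^2 - cs2) (tau^2 - cf2) = q2 q3.
   The factors have no common zero: where q1 = 0 the quadratic equals
   -(H.xi)^2 |xi x H|^2 < 0, and cf2 - cs2 is the square root of a discriminant
   that is positive because b^2 c^2 |xi|^2 > 0. *)

Lemma det_mx33 (R : comPzRingType) (A : 'M[R]_3) : \det A =
  A 0 0 * (A 1 1 * A 2%:R 2%:R - A 1 2%:R * A 2%:R 1)
  - A 0 1 * (A 1 0 * A 2%:R 2%:R - A 1 2%:R * A 2%:R 0)
  + A 0 2%:R * (A 1 0 * A 2%:R 1 - A 1 1 * A 2%:R 0).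
Proof.
have -> : A = \matrix_(i < 3, j < 3) A (inord i) (inord j).
  by apply/matrixP => i j; rewrite mxE !inord_val.
rewrite (expand_det_row _ 0) !big_ord_recl big_ord0 /= /cofactor.
rewrite !(expand_det_row _ 0) !big_ord_recl !big_ord0 /= /cofactor !det_mx11 !mxE /=.
rewrite /bump /= (_ : (1 %% 3 = 1)%N) // (_ : ((1 + 1) %% 3 = 2)%N) //.
rewrite /= !(addn0, add0n, addn1).
ring.
Qed.

Section Vectors.
Variable R : rcfType.
Implicit Types u v : 'cV[R]_3.

Lemma dotvE u v : dotv u v = u 0 0 * v 0 0 + u 1 0 * v 1 0 + u 2%:R 0 * v 2%:R 0.
Proof.
rewrite /dotv mxE !big_ord_recl big_ord0 !mxE addr0 addrA.
have -> : lift ord0 ord0 = 1 :> 'I_3 by apply/val_inj.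
by have -> : lift ord0 (lift ord0 ord0) = 2%:R :> 'I_3 by apply/val_inj.
Qed.

Lemma dotvC u v : dotv u v = dotv v u.
Proof. by rewrite !dotvE; ring. Qed.

Lemma dot0v v : dotv 0 v = 0.
Proof. by rewrite /dotv trmx0 mul0mx mxE. Qed.

Lemma dotvv_gt0 v : v != 0 -> 0 < dotv v v.
Proof.
have sq_ge0 i : 0 <= v^T 0 i * v i 0 by rewrite mxE -expr2 sqr_ge0.
rewrite lt_def /dotv mxE sumr_ge0 // andbT; apply: contraNN => /eqP v_norm0.
apply/eqP/matrixP => i j; rewrite ord1 mxE; apply/eqP.
have /(_ i isT)/eqP := psumr_eq0P (fun k _ => sq_ge0 k) v_norm0.
by rewrite mxE -expr2 sqrf_eq0.
Qed.

Lemma crossvE u v :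
  [/\ crossv u v 0 0 = u 1 0 * v 2%:R 0 - u 2%:R 0 * v 1 0,
      crossv u v 1 0 = u 2%:R 0 * v 0 0 - u 0 0 * v 2%:R 0 &
      crossv u v 2%:R 0 = u 0 0 * v 1 0 - u 1 0 * v 0 0].
Proof. by rewrite !mxE. Qed.

Lemma dotv_crossv u v :
  dotv (crossv u v) (crossv u v) = dotv u u * dotv v v - dotv u v ^+ 2.
Proof. by case: (crossvE u v) => c0 c1 c2; rewrite !dotvE c0 c1 c2; ring. Qed.

End Vectors.

Section PrincipalSymbol.
Variables (R : rcfType) (gamma rho pp tau : R) (H xi : 'cV[R]_3).

Definition magnetosonic : R :=
  rho ^+ 2 * tau ^+ 4 - (gamma * pp + dotv H H) * dotv xi xi * rho * tau ^+ 2
  + gamma * pp * dotv H xi ^+ 2 * dotv xi xi.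

Lemma p2E i j : p2 gamma rho pp H tau xi i j =
  (rho * tau ^+ 2 - dotv H xi ^+ 2) * (i == j)%:R
  - (gamma * pp + dotv H H) * (xi i 0 * xi j 0)
  + dotv H xi * (xi i 0 * H j 0 + H i 0 * xi j 0).
Proof. by rewrite /p2 /tensv !mxE !big_ord1 !mxE mulr_natr. Qed.

Lemma det_p2 : \det (p2 gamma rho pp H tau xi) = q1 rho H tau xi * magnetosonic.
Proof. by rewrite det_mx33 !p2E /q1 /magnetosonic /= !dotvE; ring. Qed.

Lemma magnetosonic_q1 : q1 rho H tau xi = 0 ->
  magnetosonic = - (dotv H xi ^+ 2 * dotv (crossv xi H) (crossv xi H)).
Proof.
rewrite /q1 /magnetosonic => /eqP; rewrite subr_eq0 => /eqP q1_0.
have -> : rho ^+ 2 * tau ^+ 4 = (rho * tau ^+ 2) ^+ 2 by ring.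
have -> : (gamma * pp + dotv H H) * dotv xi xi * rho * tau ^+ 2 =
          (gamma * pp + dotv H H) * dotv xi xi * (rho * tau ^+ 2) by ring.
by rewrite q1_0 dotv_crossv [dotv xi H]dotvC; ring.
Qed.

Lemma cf2_sub_cs2 : cf2 gamma rho pp H xi - cs2 gamma rho pp H xi = disc gamma rho pp H xi.
Proof. by rewrite /cf2 /cs2; field. Qed.

Hypotheses (rho_gt0 : 0 < rho) (c2_gt0 : 0 < c2 gamma rho pp).
Hypotheses (xi_dot_H_neq0 : dotv xi H != 0) (xi_cross_H_neq0 : crossv xi H != 0).

Lemma disc_gt0 : 0 < disc gamma rho pp H xi.
Proof.
have xi_neq0 : xi != 0 by apply: contraNneq xi_dot_H_neq0 => ->; rewrite dot0v.
have b2_gt0 : 0 < b2 rho H xi by rewrite divr_gt0 ?dotvv_gt0.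
rewrite /disc sqrtr_gt0 ltr_wpDl ?(mulr_ge0 (sqr_ge0 _) (sqr_ge0 _)) //.
by apply/mulr_gt0/dotvv_gt0/xi_neq0/mulr_gt0/c2_gt0/mulr_gt0/b2_gt0; rewrite ltr0n.
Qed.

Lemma sqr_disc : disc gamma rho pp H xi ^+ 2 =
  (c2 gamma rho pp - h2 rho H) ^+ 2 * dotv xi xi ^+ 2
  + 4 * b2 rho H xi * c2 gamma rho pp * dotv xi xi.
Proof. by have := disc_gt0; rewrite /disc sqrtr_gt0 => /ltW/sqr_sqrtr. Qed.

Lemma q2_mul_q3 :
  q2 gamma rho pp H tau xi * q3 gamma rho pp H tau xi = magnetosonic.
Proof.
have rho_neq0 : rho != 0 by rewrite gt_eqF.
have -> : q2 gamma rho pp H tau xi * q3 gamma rho pp H tau xi =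
    rho ^+ 2 * ((tau ^+ 2 - 2^-1 * ((c2 gamma rho pp + h2 rho H) * dotv xi xi)) ^+ 2
                - 4^-1 * disc gamma rho pp H xi ^+ 2).
  by rewrite /q2 /q3 /cs2 /cf2; field.
by rewrite sqr_disc /magnetosonic /b2 /c2 /h2 dotv_crossv [dotv xi H]dotvC; field.
Qed.

Lemma det_p2_q1q2q3 : \det (p2 gamma rho pp H tau xi) =
  q1 rho H tau xi * (q2 gamma rho pp H tau xi * q3 gamma rho pp H tau xi).
Proof. by rewrite det_p2 q2_mul_q3. Qed.

Lemma q1_disjoint_q2_q3 : q1 rho H tau xi == 0 ->
  q2 gamma rho pp H tau xi * q3 gamma rho pp H tau xi != 0.
Proof.
move=> /eqP/magnetosonic_q1; rewrite q2_mul_q3 => ->.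
have dot2_neq0 : dotv H xi ^+ 2 != 0 by rewrite sqrf_eq0 dotvC.
by rewrite oppr_eq0 mulf_neq0 // gt_eqF ?dotvv_gt0.
Qed.

Lemma q2_disjoint_q3 : q2 gamma rho pp H tau xi == 0 -> q3 gamma rho pp H tau xi != 0.
Proof.
rewrite /q2 /q3 !mulf_eq0 (gt_eqF rho_gt0) !subr_eq0 => /eqP ->.
apply/eqP => cs2_eq_cf2; have := disc_gt0.
by rewrite -cf2_sub_cs2 cs2_eq_cf2 subrr ltxx.
Qed.

End PrincipalSymbol.

Theorem lemma5p1 (R : rcfType) (rho p : 'cV[R]_3 -> R) (H : 'cV[R]_3 -> 'cV[R]_3)
    (gamma : R) (t : R) (x : 'cV[R]_3) (tau : R) (xi : 'cV[R]_3) :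
  0 < rho x ->
  0 < c2 gamma (rho x) (p x) ->
  0 < dotv (H x) (H x) ->
  dotv (H x) (H x) != rho x * c2 gamma (rho x) (p x) ->
  dotv xi (H x) != 0 ->
  crossv xi (H x) != 0 ->
  let a1 := q1 (rho x) (H x) tau xi == 0 in
  let a2 := q2 gamma (rho x) (p x) (H x) tau xi == 0 in
  let a3 := q3 gamma (rho x) (p x) (H x) tau xi == 0 in
  ((\det (p2 gamma (rho x) (p x) (H x) tau xi) == 0) = [|| a1, a2 | a3])
  /\ ~~ (a1 && a2) /\ ~~ (a1 && a3) /\ ~~ (a2 && a3).
Proof.
move=> rho_gt0 c2_gt0 _ _ dot_neq0 cross_neq0 a1 a2 a3.
have det_q123 := det_p2_q1q2q3 tau rho_gt0 c2_gt0 dot_neq0 cross_neq0.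
have q1_q23 := q1_disjoint_q2_q3 rho_gt0 c2_gt0 dot_neq0 cross_neq0.
have q2_q3 := q2_disjoint_q3 rho_gt0 c2_gt0 dot_neq0 cross_neq0.
split; first by rewrite det_q123 mulf_eq0 [_ * _ == 0]mulf_eq0.
rewrite /a1 /a2 /a3; split; last split; apply/andP.
- by case=> /q1_q23; rewrite mulf_eq0 negb_or => /andP[/negbTE->].
- by case=> /q1_q23; rewrite mulf_eq0 negb_or => /andP[_ /negbTE->].
- by case=> /q2_q3/negbTE->.
Qed.
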